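(* Let $\alpha\ge1$ and let $\beta$ be an odd positive integer, and let ${\cal C}\subseteq\mathbb{Z}_2^\alpha\times\mathbb{Z}_4^\beta$ be a separable $\mathbb{Z}_2\mathbb{Z}_4$-additive code. Then ${\cal C}$ is cyclic if and only if ${\cal C}_X$ is a binary cyclic code and ${\cal C}_Y$ is a cyclic code over $\mathbb{Z}_4$. Moreover, in this case, in polynomial representation ${\cal C}=\langle (b\mid 0),(0\mid fh+2f)\rangle$ for some $b\in\mathbb{Z}_2[x]$ dividing $x^\alpha-1$ and $f,h,g\in\mathbb{Z}_4[x]$ with $fhg=x^\beta-1$.
   Context: A $\mathbb{Z}_2\mathbb{Z}_4$-additive code is a subgroup ${\cal C}$ of $\mathbb{Z}_2^\alpha\times\mathbb{Z}_4^\beta$; vectors are written ${\bf u}=(u\mid u')$ with $u\in\mathbb{Z}_2^\alpha$, $u'\in\mathbb{Z}_4^\beta$. ${\cal C}_X$ (resp. ${\cal C}_Y$) is the projection of ${\cal C}$ onto the first $\alpha$ (resp. last $\beta$) coordinates. ${\cal C}$ is separable if ${\cal C}={\cal C}_X\times{\cal C}_Y$. ${\cal C}$ is cyclic if $\pi({\cal C})={\cal C}$, where $\pi(u_0,\dots,u_{\alpha-1}\mid u'_0,\dots,u'_{\beta-1})=(u_{\alpha-1},u_0,\dots,u_{\alpha-2}\mid u'_{\beta-1},u'_0,\dots,u'_{\beta-2})$. Vectors are identified with elements of $R_{\alpha,\beta}=\mathbb{Z}_2[x]/(x^\alpha-1)\times\mathbb{Z}_4[x]/(x^\beta-1)$ via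 $(u\mid u')\mapsto(\sum u_ix^i\mid\sum u'_ix^i)$; $R_{\alpha,\beta}$ is a $\mathbb{Z}_4[x]$-module via $p\star(b\mid a)=(\tilde pb\mid pa)$, $\tilde p$ the reduction of $p$ mod 2, and $\langle\cdot\rangle$ denotes the generated submodule. *)

From HB Require Import structures.
From mathcomp Require Import all_boot all_order all_algebra.
Set Implicit Arguments. Unset Strict Implicit. Unset Printing Implicit Defensive.
Import GRing.Theory.
Local Open Scope ring_scope.

Definition vec2 (a : nat) := {ffun 'I_a -> 'Z_2}.
Definition vec4 (b : nat) := {ffun 'I_b -> 'Z_4}.
Definition vec24 (a b : nat) := (vec2 a * vec4 b)%type.

(* a Z2Z4-additive code: a subgroup of Z_2^a x Z_4^b (finite, so closure
   under 0 and + suffices) *)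
Definition additive24 a b (C : {set vec24 a b}) : Prop :=
  (0, 0) \in C /\
  forall u v, u \in C -> v \in C -> (u.1 + v.1, u.2 + v.2) \in C.

Definition projX a b (C : {set vec24 a b}) : {set vec2 a} := [set u.1 | u in C].
Definition projY a b (C : {set vec24 a b}) : {set vec4 b} := [set u.2 | u in C].

Definition separable24 a b (C : {set vec24 a b}) : Prop :=
  C = [set u | (u.1 \in projX C) && (u.2 \in projY C)].

Definition cshift (R : Type) n (u : {ffun 'I_n -> R}) : {ffun 'I_n -> R} :=
  [ffun i => u (ord_pred i)].

Definition pi24 a b (u : vec24 a b) : vec24 a b := (cshift u.1, cshift u.2).

Definition cyclic24 a b (C : {set vec24 a b}) : Prop :=
  [set pi24 u | u in C] = C.

Definition cyclic_code2 a (D : {set vec2 a}) : Prop :=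
  (0 \in D /\ forall u v, u \in D -> v \in D -> u + v \in D)
  /\ [set cshift u | u in D] = D.
Definition cyclic_code4 b (D : {set vec4 b}) : Prop :=
  (0 \in D /\ forall u v, u \in D -> v \in D -> u + v \in D)
  /\ [set cshift u | u in D] = D.

Definition vpoly (R : nzRingType) n (u : {ffun 'I_n -> R}) : {poly R} :=
  \sum_(i < n) (u i)%:P * 'X^i.

Definition red2 (c : 'Z_4) : 'Z_2 := (nat_of_ord c)%:R.
Definition redp (p : {poly 'Z_4}) : {poly 'Z_2} := map_poly red2 p.

(* membership of u in the Z_4[x]-submodule <(b|0),(G)> of R_{a,b},
   i.e. u = p * (b|0) + q * (0|G) for some p, q in Z_4[x], where
   p * (b'|a') = (redp p * b' | p * a') computed in
   Z_2[x]/(x^a-1) x Z_4[x]/(x^b-1). *)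
Definition in_span24 a b (bX : {poly 'Z_2}) (G : {poly 'Z_4}) (u : vec24 a b) : Prop :=
  exists (p q : {poly 'Z_4}) (r : {poly 'Z_2}) (s : {poly 'Z_4}),
    vpoly u.1 = redp p * bX + r * ('X^a - 1) /\
    vpoly u.2 = q * G + s * ('X^b - 1).

(* Since pi acts coordinatewise, a separable code is cyclic iff both of its
   projections are.  Under u |-> sum_i u_i x^i, a cyclic linear code of length n
   over Z_2 or Z_4 is an ideal of the polynomial ring containing x^n - 1.  Over
   the field Z_2 such an ideal is principal, generated by a divisor of
   x^alpha - 1.  Over Z_4, the residue ideal {b mod 2 | b in J} and the torsion
   ideal {b mod 2 | 2b in J} of the ideal J of C_Y are generated by divisors
   a and f' of x^beta - 1 with f' | a, whence x^beta - 1 = f' h' g' over Z_2.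
   For odd beta the identity x (x^beta - 1)' - beta (x^beta - 1) = beta makes
   these factors pairwise coprime, so by Hensel's lemma they lift to
   x^beta - 1 = f h g over Z_4, and then J = <f h + 2 f, x^beta - 1>. *)

From HB Require Import structures.
From mathcomp Require Import all_boot all_order all_algebra ring zify.
From Stdlib Require Import Classical.
Set Implicit Arguments. Unset Strict Implicit. Unset Printing Implicit Defensive.
Import GRing.Theory.
Local Open Scope ring_scope.

Lemma Zp_natr_surj p (c : 'Z_p) : exists k, c = k%:R.
Proof. by exists c; rewrite natr_Zp. Qed.

Lemma Xn_sub1_neq0 (R : nzRingType) n : (0 < n)%N -> ('X^n - 1 : {poly R}) != 0.
Proof. by move=> n_gt0; rewrite -size_poly_eq0 -polyC1 size_XnsubC. Qed.

Lemma red2_is_zmod_morphism : zmod_morphism red2.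
Proof. by do 2 case=> [[|[|[|[|?]]]] ?] //; apply: val_inj. Qed.

Lemma red2_is_monoid_morphism : monoid_morphism red2.
Proof.
by split; [apply: val_inj | do 2 case=> [[|[|[|[|?]]]] ?] //; apply: val_inj].
Qed.

HB.instance Definition _ := GRing.isZmodMorphism.Build _ _ red2 red2_is_zmod_morphism.
HB.instance Definition _ := GRing.isMonoidMorphism.Build _ _ red2 red2_is_monoid_morphism.
HB.instance Definition _ := GRing.RMorphism.copy redp (map_poly red2).

Lemma natr_polyZ2 n : (n%:R : {poly 'Z_2}) = (odd n)%:R.
Proof.
rewrite -!polyC_natr !Zp_nat; congr _%:P; apply: val_inj.
by rewrite /= modn2 modn_small // ltnS leq_b1.
Qed.

Lemma natr4_polyZ4 : (4%:R : {poly 'Z_4}) = 0.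
Proof. by rewrite -polyC_natr; congr _%:P; apply: val_inj. Qed.

Lemma redp_mul2 p : redp (2%:R * p) = 0.
Proof. by rewrite rmorphM rmorph_nat natr_polyZ2 mul0r. Qed.

Lemma redpXn_sub1 n : redp ('X^n - 1) = 'X^n - 1.
Proof. by rewrite rmorphB rmorph1 /= /redp map_polyXn. Qed.

Definition liftp (p : {poly 'Z_2}) : {poly 'Z_4} :=
  map_poly (fun c : 'Z_2 => (c : nat)%:R : 'Z_4) p.

Lemma liftpK : cancel liftp redp.
Proof.
move=> p; apply/polyP=> i; rewrite coef_map /= coef_map_id0 //.
by case: (p`_i) => [[|[|?]] ?] //; apply: val_inj.
Qed.

Lemma redp_eq0 p : redp p = 0 -> exists q, p = 2%:R * q.
Proof.
move=> p0; exists (map_poly (fun c : 'Z_4 => (c %/ 2)%:R) p); apply/polyP=> i.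
have := congr1 (fun q : {poly 'Z_2} => q`_i) p0.
rewrite coef_map coef0 -polyC_natr coefCM coef_map_id0 //.
by case: (p`_i) => [[|[|[|[|?]]]] ?] //= _; apply: val_inj.
Qed.

Lemma mul2_redp p q : redp p = redp q -> 2%:R * p = 2%:R * q.
Proof.
move=> pq; have [r pqr] : exists r, p - q = 2%:R * r.
  by apply: redp_eq0; rewrite rmorphB /= pq subrr.
by apply/eqP; rewrite -subr_eq0 -mulrBr pqr mulrA -natrM natr4_polyZ4 mul0r.
Qed.

Definition poly_ideal (R : nzRingType) (J : {poly R} -> Prop) : Prop :=
  [/\ J 0, forall P Q, J P -> J Q -> J (P + Q) & forall P Q, J P -> J (Q * P)].

Definition principal_ideal (R : nzRingType) (J : {poly R} -> Prop) (b : {poly R}) :=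
  forall P, J P <-> exists q, P = q * b.

Definition in_ideal2 (R : nzRingType) (G H P : {poly R}) : Prop :=
  exists q s, P = q * G + s * H.

Section PolyIdeal.
Variables (R : comNzRingType) (J : {poly R} -> Prop).
Hypothesis idJ : poly_ideal J.

Lemma ideal0 : J 0. Proof. by case: idJ. Qed.
Lemma idealD P Q : J P -> J Q -> J (P + Q). Proof. by case: idJ => _ + _; apply. Qed.
Lemma idealMl P Q : J P -> J (Q * P). Proof. by case: idJ => _ _; apply. Qed.

Lemma idealB P Q : J P -> J Q -> J (P - Q).
Proof. by move=> JP JQ; rewrite -mulN1r; apply: idealD => //; apply: idealMl. Qed.

Lemma in_ideal2_sub G H P : J G -> J H -> in_ideal2 G H P -> J P.
Proof. by move=> JG JH [q [s ->]]; apply: idealD; apply: idealMl. Qed.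

End PolyIdeal.

Section IdealOfTwo.
Variables (R : comNzRingType) (G H : {poly R}).

Lemma in_ideal2_ideal : poly_ideal (in_ideal2 G H).
Proof.
split; first by exists 0, 0; rewrite !mul0r addr0.
  by move=> _ _ [q [s ->]] [q' [s' ->]]; exists (q + q'), (s + s'); ring.
by move=> _ Q [q [s ->]]; exists (Q * q), (Q * s); ring.
Qed.

Lemma in_ideal2l : in_ideal2 G H G. Proof. by exists 1, 0; ring. Qed.
Lemma in_ideal2r : in_ideal2 G H H. Proof. by exists 0, 1; ring. Qed.

End IdealOfTwo.

Section VectorPoly.
Variables (R : comNzRingType) (n : nat).
Local Notation m := ('X^(n.+1) - 1 : {poly R}).
Implicit Types u v : {ffun 'I_n.+1 -> R}.

Lemma vpoly0 : vpoly (0 : {ffun 'I_n.+1 -> R}) = 0.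
Proof. by rewrite /vpoly big1 // => i _; rewrite ffunE mul0r. Qed.

Lemma vpolyD u v : vpoly (u + v) = vpoly u + vpoly v.
Proof.
by rewrite /vpoly -big_split; apply: eq_bigr => i _; rewrite ffunE polyCD mulrDl.
Qed.

Lemma coef_vpoly u (i : 'I_n.+1) : (vpoly u)`_i = u i.
Proof.
rewrite /vpoly coef_sum (bigD1 i) //= coefCM coefXn eqxx mulr1 big1 ?addr0 // => j ji.
by rewrite coefCM coefXn eq_sym (inj_eq val_inj) (negPf ji) mulr0.
Qed.

Lemma size_vpoly u : (size (vpoly u) <= n.+1)%N.
Proof.
apply: leq_trans (size_sum _ _ _) _; apply/bigmax_leqP => i _.
apply: leq_trans (size_polyMleq _ _) _; rewrite size_polyXn addnS /=.
by apply: leq_trans (leq_add (size_polyC_leq1 _) (leqnn i)) _; rewrite add1n.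
Qed.

Lemma vpoly_cshift u : 'X * vpoly u = vpoly (cshift u) + (u ord_max)%:P * m.
Proof.
have shift_lift (i : 'I_n) : (cshift u (lift ord0 i))%:P * 'X^(bump 0 i) =
    'X * ((u (widen_ord (leqnSn n) i))%:P * 'X^i).
  rewrite ffunE /bump /= exprS mulrCA; congr ('X * ((u _)%:P * _)).
  by apply: val_inj; rewrite /= add0n modnDr modn_small // leqW.
have pred0 : ord_pred ord0 = ord_max :> 'I_n.+1 by apply: val_inj; rewrite /= modn_small.
rewrite /vpoly big_ord_recr big_ord_recl /= (eq_bigr _ (fun i _ => shift_lift i)).
rewrite -mulr_sumr.
rewrite ffunE pred0 exprS; ring.
Qed.

Lemma vpoly_eq_mod u v (s : {poly R}) : vpoly u = vpoly v + s * m -> u = v.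
Proof.
move=> uv; have s0 : s = 0.
  apply/eqP; apply: contraT; rewrite -size_poly_eq0 => s_neq0.
  have : (size (s * m)%R <= n.+1)%N.
    rewrite (_ : s * m = vpoly u - vpoly v); last by rewrite uv addrAC subrr add0r.
    by apply: leq_trans (size_polyD _ _) _; rewrite size_polyN geq_max !size_vpoly.
  rewrite size_Mmonic ?monicXnsubC -?size_poly_eq0 // -polyC1 size_XnsubC //; lia.
by apply/ffunP => i; rewrite -!coef_vpoly uv s0 mul0r addr0.
Qed.

End VectorPoly.

Section CodeIdeal.
Variables (R : finComNzRingType) (n : nat).
Local Notation m := ('X^(n.+1) - 1 : {poly R}).
Implicit Types (u : {ffun 'I_n.+1 -> R}) (D : {set {ffun 'I_n.+1 -> R}}).

Definition code_ideal (D : {set {ffun 'I_n.+1 -> R}}) (P : {poly R}) : Prop :=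
  exists2 u, u \in D & exists s, P = vpoly u + s * m.

Lemma mem_code_ideal D u : u \in D <-> code_ideal D (vpoly u).
Proof.
split=> [uD | [v vD [s /vpoly_eq_mod ->]]] //.
by exists u => //; exists 0; rewrite mul0r addr0.
Qed.

Lemma code_ideal_Xn_sub1 D : 0 \in D -> code_ideal D m.
Proof. by exists 0 => //; exists 1; rewrite vpoly0 add0r mul1r. Qed.

Lemma cyclic_code_ideal D :
  (0 \in D /\ forall u v, u \in D -> v \in D -> u + v \in D) ->
  [set cshift u | u in D] = D -> (forall c : R, exists k, c = k%:R) ->
  poly_ideal (code_ideal D).
Proof.
move=> [D0 DD] Dcyc Rnat.
have J0 : code_ideal D 0 by exists 0 => //; exists 0; rewrite vpoly0 mul0r addr0.
have JD P Q : code_ideal D P -> code_ideal D Q -> code_ideal D (P + Q).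
  move=> [u uD [s ->]] [v vD [t ->]]; exists (u + v); first exact: DD.
  by exists (s + t); rewrite vpolyD; ring.
have JX P : code_ideal D P -> code_ideal D ('X * P).
  move=> [u uD [s ->]]; exists (cshift u); first by rewrite -Dcyc imset_f.
  by exists ((u ord_max)%:P + 'X * s); rewrite mulrDr vpoly_cshift; ring.
split=> // P Q JP; elim/poly_ind: Q P JP => [|Q c IH] P JP; first by rewrite mul0r.
rewrite mulrDl -mulrA; apply: (JD); first exact/IH/JX.
have [k ->] := Rnat c; rewrite polyC_natr mulr_natl.
by elim: k => [|k IHk]; rewrite ?mulr0n // mulrS; apply: JD.
Qed.

End CodeIdeal.

Lemma poly_ideal_principal (F : fieldType) (J : {poly F} -> Prop) a :
  poly_ideal J -> J a -> a != 0 ->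
  exists b, (exists c, b * c = a) /\ principal_ideal J b.
Proof.
move=> idJ Ja a_neq0.
have [b [Jb b_neq0 b_min]] : exists b, [/\ J b, b != 0 &
    forall P, J P -> P != 0 -> (size b <= size P)%N].
  elim: {a}(size a) {-2}a (leqnn (size a)) Ja a_neq0 => [|k IH] a sa Ja a_neq0.
    by move: a_neq0; rewrite -size_poly_eq0 -leqn0 sa.
  have [[P [JP P_neq0 sP]] | no_smaller] :=
    classic (exists P, [/\ J P, P != 0 & (size P < size a)%N]).
    by apply: (IH P) => //; rewrite -ltnS (leq_trans sP).
  exists a; split=> // P JP P_neq0; rewrite leqNgt; apply/negP => sP.
  by apply: no_smaller; exists P.
have JE P : J P <-> exists q, P = q * b.
  split=> [JP | [q ->]]; last exact: idealMl.
  exists (P %/ b); apply/eqP; rewrite -subr_eq0; apply/negPn/negP => r_neq0.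
  have Jr : J (P - P %/ b * b) by apply: idealB => //; apply: idealMl.
  have := b_min _ Jr r_neq0; rewrite {1}(divp_eq P b) addrAC subrr add0r leqNgt.
  by rewrite ltn_modp b_neq0.
exists b; split=> //; exists (a %/ b); rewrite mulrC.
by have [q ->] := (JE a).1 Ja; rewrite mulpK.
Qed.

Lemma Xn_sub1_factor_bezout (R : comNzRingType) n (X Y Z : {poly R}) :
  X * Y * Z = 'X^n - 1 -> exists s t, s * X + t * Y = n%:R.
Proof.
move=> XYZ.
have euler : 'X * ('X^n - 1)^`() - n%:R * ('X^n - 1) = n%:R :> {poly R}.
  case: n {XYZ} => [|k]; first by rewrite expr0 subrr deriv0 mulr0 mul0r subr0.
  rewrite derivB derivXn -polyC1 derivC polyC1 subr0 -mulr_natl /= mulrCA -exprS; ring.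
rewrite -XYZ !derivM in euler.
exists ('X * (Y^`() * Z + Y * Z^`()) - n%:R * (Y * Z)), ('X * X^`() * Z).
by rewrite -[RHS]euler; ring.
Qed.

Lemma Xn_sub1_factor_bezout_Z2 n (X Y Z : {poly 'Z_2}) :
  odd n -> X * Y * Z = 'X^n - 1 -> exists s t, s * X + t * Y = 1.
Proof. by move=> n_odd /Xn_sub1_factor_bezout; rewrite natr_polyZ2 n_odd. Qed.

Lemma hensel_Z4 (K : {poly 'Z_4}) (a b : {poly 'Z_2}) :
  a * b = redp K -> (exists s t, s * a + t * b = 1) ->
  exists A B, [/\ A * B = K, redp A = a & redp B = b].
Proof.
move=> abK [s [t st1]].
have [E eE] : exists E, liftp a * liftp b - K = 2%:R * E.
  by apply: redp_eq0; rewrite rmorphB rmorphM /= !liftpK abK subrr.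
set U := liftp (t * redp E); set V := liftp (s * redp E).
have lift_mod2 P Q : redp (liftp P + 2%:R * Q) = P.
  by rewrite rmorphD /= redp_mul2 addr0 liftpK.
exists (liftp a + 2%:R * U), (liftp b + 2%:R * V); split; rewrite ?lift_mod2 //.
have correction : 2%:R * (U * liftp b + V * liftp a) = 2%:R * E.
  apply: mul2_redp; rewrite rmorphD !rmorphM /= !liftpK.
  by rewrite -[RHS]mul1r -st1; ring.
have -> : (liftp a + 2%:R * U) * (liftp b + 2%:R * V) =
    liftp a * liftp b + 2%:R * (U * liftp b + V * liftp a) + 4%:R * (U * V) by ring.
rewrite correction natr4_polyZ4 mul0r addr0.
rewrite (_ : liftp a * liftp b = K + 2%:R * E).
  by rewrite -addrA -mulrDl -natrD natr4_polyZ4 mul0r addr0.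
by rewrite -eE addrC subrK.
Qed.

Definition red_ideal (J : {poly 'Z_4} -> Prop) (p : {poly 'Z_2}) : Prop :=
  exists2 P, J P & redp P = p.

Definition tors_ideal (J : {poly 'Z_4} -> Prop) (p : {poly 'Z_2}) : Prop :=
  exists2 P, J (2%:R * P) & redp P = p.

Section Z4Ideal.
Variables (n : nat) (J : {poly 'Z_4} -> Prop).
Hypotheses (n_odd : odd n) (idJ : poly_ideal J) (J_Xn_sub1 : J ('X^n - 1)).

Lemma red_ideal_ideal : poly_ideal (red_ideal J).
Proof.
split.
- by exists 0; [apply: ideal0 | rewrite rmorph0].
- by move=> _ _ [P JP <-] [Q JQ <-]; exists (P + Q); [apply: idealD | rewrite rmorphD].
- move=> _ Q [P JP <-]; exists (liftp Q * P); first exact: idealMl.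
  by rewrite rmorphM /= liftpK.
Qed.

Lemma tors_ideal_ideal : poly_ideal (tors_ideal J).
Proof.
split.
- by exists 0; [rewrite mulr0; apply: ideal0 | rewrite rmorph0].
- move=> _ _ [P JP <-] [Q JQ <-]; exists (P + Q); last by rewrite rmorphD.
  by rewrite mulrDr; apply: idealD.
- move=> _ Q [P JP <-]; exists (liftp Q * P); last by rewrite rmorphM /= liftpK.
  by rewrite mulrCA; apply: idealMl.
Qed.

Lemma tors_idealE P : tors_ideal J (redp P) <-> J (2%:R * P).
Proof. by split=> [[Q JQ /mul2_redp <-] | J2P] //; exists P. Qed.

Lemma Z4_ideal_factors : exists f h g, [/\ f * h * g = 'X^n - 1,
  principal_ideal (red_ideal J) (redp (f * h))
  & principal_ideal (tors_ideal J) (redp f)].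
Proof.
have Xn_neq0 : ('X^n - 1 : {poly 'Z_2}) != 0 by rewrite Xn_sub1_neq0 ?odd_gt0.
have red_Xn : red_ideal J ('X^n - 1) by exists ('X^n - 1); rewrite ?redpXn_sub1.
have tors_Xn : tors_ideal J ('X^n - 1).
  by rewrite -redpXn_sub1; apply/tors_idealE; apply: idealMl.
(* 'Z_2 carries no canonical field structure, but 'F_2 is convertible to it. *)
have [a [[c ac] red_a]] :=
  @poly_ideal_principal 'F_2 _ _ red_ideal_ideal red_Xn Xn_neq0.
have [f2 [_ tors_f2]] :=
  @poly_ideal_principal 'F_2 _ _ tors_ideal_ideal tors_Xn Xn_neq0.
have [h2 a_eq] : exists h2, a = h2 * f2.
  apply/tors_f2; have [P JP <-] := (red_a a).2 (ex_intro _ 1 (esym (mul1r a))).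
  by apply/tors_idealE; apply: idealMl.
have Xn_fhc : f2 * (h2 * c) = 'X^n - 1 by rewrite -ac a_eq mulrCA mulrA.
have [f [K [fK rf rK]]] :
    exists f K, [/\ f * K = 'X^n - 1, redp f = f2 & redp K = h2 * c].
  apply: hensel_Z4; first by rewrite redpXn_sub1.
  by apply: (Xn_sub1_factor_bezout_Z2 (Z := 1) n_odd); rewrite mulr1.
have [h [g [hg rh rg]]] : exists h g, [/\ h * g = K, redp h = h2 & redp g = c].
  apply: hensel_Z4; first by rewrite rK.
  by apply: (Xn_sub1_factor_bezout_Z2 (Z := f2) n_odd); rewrite mulrC.
exists f, h, g; split; first by rewrite -mulrA hg.
  by rewrite rmorphM /= rf rh mulrC -a_eq.
by rewrite rf.
Qed.

Section Generators.
Variables f h g : {poly 'Z_4}.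
Hypotheses (fhg : f * h * g = 'X^n - 1)
  (red_gen : principal_ideal (red_ideal J) (redp (f * h)))
  (tors_gen : principal_ideal (tors_ideal J) (redp f)).

Let red_fhg : redp f * redp h * redp g = 'X^n - 1.
Proof. by rewrite -!rmorphM /= fhg redpXn_sub1. Qed.

Let bezout_fg : exists s t, s * redp f + t * redp g = 1.
Proof. by apply: (Xn_sub1_factor_bezout_Z2 (Z := redp h) n_odd); rewrite mulrAC. Qed.

Let bezout_hg : exists s t, s * redp h + t * redp g = 1.
Proof. by apply: (Xn_sub1_factor_bezout_Z2 (Z := redp f) n_odd); rewrite mulrC mulrA. Qed.

Lemma mul2_tors_gen P : J (2%:R * P) -> exists q, 2%:R * P = q * (2%:R * f).
Proof.
move=> /tors_idealE /tors_gen [q rP]; exists (liftp q).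
by rewrite mulrCA; apply: mul2_redp; rewrite rmorphM /= liftpK.
Qed.

Lemma Z4_ideal_mem_gens : J (2%:R * f) /\ J (f * h).
Proof.
have J2f : J (2%:R * f) by apply/tors_idealE/tors_gen; exists 1; rewrite mul1r.
split=> //.
have [P JP rP] : red_ideal J (redp (f * h)) by apply/red_gen; exists 1; rewrite mul1r.
have [Q eQ] : exists Q, P = f * h + 2%:R * Q.
  have [Q PQ] : exists Q, P - f * h = 2%:R * Q.
    by apply: redp_eq0; rewrite rmorphB /= rP subrr.
  by exists Q; rewrite -PQ addrC subrK.
have J2gQ : J (2%:R * (g * Q)).
  rewrite (_ : _ * _ = g * P - ('X^n - 1)); first by apply: idealB => //; apply: idealMl.
  by rewrite eQ -fhg; ring.
have [s [t st]] := bezout_fg.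
have [k gQ] := (tors_gen _).1 ((tors_idealE _).2 J2gQ).
have J2Q : J (2%:R * Q).
  apply/tors_idealE/tors_gen; exists (s * redp Q + t * k).
  rewrite rmorphM /= in gQ.
  by rewrite -[LHS]mul1r -st mulrDl -[t * _ * _]mulrA gQ; ring.
rewrite (_ : f * h = P - 2%:R * Q); first exact: idealB.
by rewrite eQ addrK.
Qed.

Lemma Z4_ideal_sub P : J P -> in_ideal2 (f * h + 2%:R * f) ('X^n - 1) P.
Proof.
set G := f * h + 2%:R * f; set I := in_ideal2 G ('X^n - 1).
have idI : poly_ideal I := in_ideal2_ideal _ _.
have IG : I G := in_ideal2l _ _.
have IXn : I ('X^n - 1) := in_ideal2r _ _.
have I2f : I (2%:R * f).
  have I2fh : I (2%:R * (f * h)).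
    rewrite (_ : _ * _ = 2%:R * G); first exact: idealMl.
    by rewrite /G mulrDr [2%:R * (2%:R * f)]mulrA -natrM natr4_polyZ4 mul0r addr0.
  have I2fg : I (2%:R * (f * g)).
    rewrite (_ : _ * _ = g * G - ('X^n - 1)).
      by apply: (idealB idI) => //; apply: idealMl.
    by rewrite /G -fhg; ring.
  have [s [t st]] := bezout_hg.
  rewrite (_ : _ * _ = liftp s * (2%:R * (f * h)) + liftp t * (2%:R * (f * g))).
    by apply: (idealD idI); apply: idealMl.
  transitivity (2%:R * (f * (liftp s * h + liftp t * g))); last by ring.
  by apply: mul2_redp; rewrite rmorphM rmorphD !rmorphM /= !liftpK st mulr1.
have Ifh : I (f * h).
  rewrite (_ : f * h = G - 2%:R * f); first exact: (idealB idI).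
  by rewrite /G addrK.
have [_ Jfh] := Z4_ideal_mem_gens.
move=> JP; have [k rP] := (red_gen (redp P)).1 (ex_intro2 _ _ P JP erefl).
have [E eE] : exists E, P - liftp k * (f * h) = 2%:R * E.
  by apply: redp_eq0; rewrite rmorphB rmorphM /= liftpK rP subrr.
have [q qE] : exists q, 2%:R * E = q * (2%:R * f).
  by apply: mul2_tors_gen; rewrite -eE; apply: (idealB idJ) => //; apply: idealMl.
rewrite (_ : P = liftp k * (f * h) + q * (2%:R * f)).
  by apply: (idealD idI); apply: idealMl.
by rewrite -qE -eE addrC subrK.
Qed.

Lemma Z4_idealE P : J P <-> in_ideal2 (f * h + 2%:R * f) ('X^n - 1) P.
Proof.
have [J2f Jfh] := Z4_ideal_mem_gens.
by split; [exact: Z4_ideal_sub | apply: in_ideal2_sub => //; apply: idealD].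
Qed.

End Generators.

Lemma Z4_ideal_generators : exists f h g, f * h * g = 'X^n - 1 /\
  forall P, J P <-> in_ideal2 (f * h + 2%:R * f) ('X^n - 1) P.
Proof.
have [f [h [g [fhg red_gen tors_gen]]]] := Z4_ideal_factors.
by exists f, h, g; split=> // P; apply: Z4_idealE fhg red_gen tors_gen P.
Qed.

End Z4Ideal.

Lemma imset_eq_stable (T : finType) (f : T -> T) (S : {set T}) : injective f ->
  [set f x | x in S] = S <-> {in S, forall x, f x \in S}.
Proof.
move=> f_inj; split=> [fS x xS | f_stable]; first by rewrite -fS imset_f.
apply/eqP; rewrite eqEcard card_imset // leqnn andbT.
by apply/subsetP => _ /imsetP [x xS ->]; apply: f_stable.
Qed.

Lemma cshift_inj (R : Type) n : injective (@cshift R n).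
Proof.
move=> u v uv; apply/ffunP => i.
by have := congr1 (fun w : {ffun 'I_n -> R} => w (ordS i)) uv; rewrite !ffunE ordSK.
Qed.

Lemma pi24_inj a b : injective (@pi24 a b).
Proof. by case=> u1 u2 [v1 v2] [/cshift_inj -> /cshift_inj ->]. Qed.

Section SeparableCode.
Variables (a b : nat) (C : {set vec24 a b}).
Hypotheses (addC : additive24 C) (sepC : separable24 C).

Lemma mem_separable u : u \in C = (u.1 \in projX C) && (u.2 \in projY C).
Proof. by rewrite {1}sepC inE. Qed.

Lemma projX_additive :
  0 \in projX C /\ forall u v, u \in projX C -> v \in projX C -> u + v \in projX C.
Proof.
have [C0 CD] := addC; split; first by apply/imsetP; exists (0, 0).
move=> _ _ /imsetP [x xC ->] /imsetP [y yC ->].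
by apply/imsetP; exists (x.1 + y.1, x.2 + y.2) => //; apply: CD.
Qed.

Lemma projY_additive :
  0 \in projY C /\ forall u v, u \in projY C -> v \in projY C -> u + v \in projY C.
Proof.
have [C0 CD] := addC; split; first by apply/imsetP; exists (0, 0).
move=> _ _ /imsetP [x xC ->] /imsetP [y yC ->].
by apply/imsetP; exists (x.1 + y.1, x.2 + y.2) => //; apply: CD.
Qed.

Lemma cyclic24_separable :
  cyclic24 C <-> cyclic_code2 (projX C) /\ cyclic_code4 (projY C).
Proof.
rewrite /cyclic24 /cyclic_code2 /cyclic_code4 (imset_eq_stable _ (@pi24_inj _ _)).
rewrite !(imset_eq_stable _ (@cshift_inj _ _)).
split=> [C_stable | [[_ X_stable] [_ Y_stable]] u].
  split; split; [exact: projX_additive | | exact: projY_additive | ];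
    by move=> _ /imsetP [u uC ->]; apply/imsetP; exists (pi24 u) => //; apply: C_stable.
rewrite !mem_separable => /andP [uX uY].
by apply/andP; split; [apply: X_stable | apply: Y_stable].
Qed.

End SeparableCode.

Lemma in_span24E a b (bX : {poly 'Z_2}) (G : {poly 'Z_4}) (u : vec24 a b) :
  (exists c, bX * c = 'X^a - 1) ->
  in_span24 bX G u <->
  (exists q, vpoly u.1 = q * bX) /\ in_ideal2 G ('X^b - 1) (vpoly u.2).
Proof.
move=> [c bXc]; split=> [[p [q [r [s [u1 u2]]]]] | [[q u1] [q' [s u2]]]].
  by split; [exists (redp p + r * c); rewrite u1 -bXc; ring | exists q, s].
by exists (liftp q), q', 0, s; rewrite liftpK mul0r addr0.
Qed.

Theorem mainTheorem2 (alpha beta : nat) (C : {set vec24 alpha beta}) :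
  (1 <= alpha)%N -> odd beta ->
  additive24 C -> separable24 C ->
  (cyclic24 C <-> cyclic_code2 (projX C) /\ cyclic_code4 (projY C)) /\
  (cyclic24 C ->
   exists (bX : {poly 'Z_2}) (f h g : {poly 'Z_4}),
     (exists c : {poly 'Z_2}, bX * c = 'X^alpha - 1) /\
     f * h * g = 'X^beta - 1 /\
     forall u : vec24 alpha beta, u \in C <-> in_span24 bX (f * h + 2%:R * f) u).
Proof.
case: alpha C => [|a] C //; case: beta C => [|b] C // _ b_odd addC sepC.
have cycE := cyclic24_separable addC sepC.
split=> // /cycE [[linX cycX] [linY cycY]].
have [bX [bX_dvd genX]] := @poly_ideal_principal 'F_2 _ _
  (cyclic_code_ideal linX cycX (@Zp_natr_surj 2)) (code_ideal_Xn_sub1 linX.1)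
  (Xn_sub1_neq0 _ (ltn0Sn a)).
have [f [h [g [fhg genY]]]] := Z4_ideal_generators b_odd
  (cyclic_code_ideal linY cycY (@Zp_natr_surj 4)) (code_ideal_Xn_sub1 linY.1).
exists bX, f, h, g; split=> //; split=> // u; rewrite mem_separable // in_span24E //.
split=> [/andP [/mem_code_ideal/genX uX /mem_code_ideal/genY uY]
        | [/genX uX /genY uY]] //.
by apply/andP; split; apply/mem_code_ideal.
Qed.
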